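(* Let $\Omega\subset\mathbb{R}^d$ be compact with a probability measure $\mu$, let $1\le p<\infty$, let $X_N$ be an $N$-dimensional subspace of $\mathcal{C}(\Omega)$, let $\xi=(\xi^1,\dots,\xi^m)\in\Omega^m$ and let $\mathbf{w}=(w_1,\dots,w_m)$ with $w_j>0$. Suppose that (A1) $C_1\|u\|_{L_p(\Omega,\mu)}\le\|S(u,\xi)\|_{p,\mathbf{w}}$ for all $u\in X_N$, and (A2) $\sum_{\nu=1}^mw_\nu\le C_2$, for some constants $C_1,C_2>0$. Then for any $f\in\mathcal{C}(\Omega)$, $$\|f-\ell p\mathbf{w}(\xi,X_N)(f)\|_{L_p(\Omega,\mu)}\le 2^{1/p}(2C_1^{-1}C_2^{1/p}+1)\,d(f,X_N)_{L_p(\Omega,\mu_{\mathbf{w},\xi})},$$ where $\mu_{\mathbf{w},\xi}=\frac12\mu+\frac1{2\|\mathbf{w}\|_1}\sum_{j=1}^mw_j\delta_{\xi^j}$ and $\|\mathbf{w}\|_1=\sum_{j=1}^mw_j$.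
   Context: $\|S(f,\xi)\|_{p,\mathbf{w}}:=(\sum_{\nu=1}^mw_\nu|f(\xi^\nu)|^p)^{1/p}$. The weighted least squares operator $\ell p\mathbf{w}(\xi,X_N)(f)$ denotes an element $u\in X_N$ minimizing $\|S(f-u,\xi)\|_{p,\mathbf{w}}$. For a probability measure $\nu$, $d(f,X_N)_{L_p(\Omega,\nu)}=\inf_{u\in X_N}\|f-u\|_{L_p(\Omega,\nu)}$. $\delta_x$ is the Dirac measure at $x$. *)

From HB Require Import structures.
From mathcomp Require Import all_boot all_order all_algebra.
From mathcomp Require Import all_classical all_reals all_analysis.
Set Implicit Arguments. Unset Strict Implicit. Unset Printing Implicit Defensive.
Import Order.TTheory GRing.Theory Num.Theory.
Import numFieldNormedType.Exports.
Local Open Scope classical_set_scope.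
Local Open Scope ring_scope.

(* R^d is modelled as row vectors 'rV[R]_d with their usual (normed) topology.
   borelRd R d is the same carrier equipped with the Borel sigma-algebra,
   i.e. the sigma-algebra generated by the open sets of 'rV[R]_d. *)
Definition borelRd (R : realType) (d : nat) :=
  g_sigma_algebraType (@open 'rV[R]_d).

Definition LpnormOn (R : realType) (d : nat) (nu : set (borelRd R d) -> \bar R)
    (Omega : set 'rV[R]_d) (p : R) (g : 'rV[R]_d -> R) : \bar R :=
  poweR (\int[nu]_(x in (Omega : set (borelRd R d))) ((`|g x| `^ p)%:E)) p^-1.

Definition Snorm (R : realType) (d m : nat) (w : 'I_m -> R)
    (xi : 'I_m -> 'rV[R]_d) (p : R) (g : 'rV[R]_d -> R) : R :=
  (\sum_(j < m) w j * `|g (xi j)| `^ p) `^ p^-1.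

Definition mu_wxi (R : realType) (d m : nat)
    (mu : set (borelRd R d) -> \bar R) (w : 'I_m -> R) (xi : 'I_m -> 'rV[R]_d)
    : set (borelRd R d) -> \bar R :=
  fun A => ((2^-1)%:E * mu A
    + \sum_(j < m) ((w j / (2 * \sum_(i < m) w i))%:E
                      * @dirac _ (borelRd R d) (xi j) R A))%E.

(* The subspace X_N of C(Omega) spanned by phi_1, ..., phi_N (a basis, see the
   theorem's hypotheses); an element of C(Omega) is identified with any function
   on R^d having the right values on Omega. *)
Definition inSpanOn (R : realType) (d N : nat) (Omega : set 'rV[R]_d)
    (phi : 'I_N -> 'rV[R]_d -> R) (u : 'rV[R]_d -> R) : Prop :=
  exists c : 'I_N -> R, forall x, Omega x -> u x = \sum_(i < N) c i * phi i x.

Definition lin_indep_on (R : realType) (d N : nat) (Omega : set 'rV[R]_d)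
    (phi : 'I_N -> 'rV[R]_d -> R) : Prop :=
  forall c : 'I_N -> R,
    (forall x, Omega x -> \sum_(i < N) c i * phi i x = 0) -> forall i, c i = 0.

Definition distLp (R : realType) (d N : nat) (nu : set (borelRd R d) -> \bar R)
    (Omega : set 'rV[R]_d) (p : R) (phi : 'I_N -> 'rV[R]_d -> R)
    (f : 'rV[R]_d -> R) : \bar R :=
  ereal_inf [set LpnormOn nu Omega p (f \- u) | u in inSpanOn Omega phi].

From HB Require Import structures.
From mathcomp Require Import all_boot all_order all_algebra.
From mathcomp Require Import all_classical all_reals all_analysis.
From mathcomp Require Import measurable_realfun ring.

Set Implicit Arguments.
Unset Strict Implicit.
Unset Printing Implicit Defensive.

Import Order.TTheory GRing.Theory Num.Theory.
Import numFieldNormedType.Exports.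
Local Open Scope classical_set_scope.
Local Open Scope ring_scope.

(* Fix u in X_N.  By Minkowski, (A1) applied to u - u0, the triangle inequality
   for the discrete norm and the minimality of u0,
     ||f - u0||_mu <= ||f - u||_mu + C1^-1 (||S(u - f)|| + ||S(f - u0)||)
                   <= ||f - u||_mu + 2 C1^-1 ||S(f - u)||.
   Both terms are bounded by multiples of ||f - u|| in L_p(mu_{w,xi}), because
   mu <= 2 mu_{w,xi} and, by (A2), sum_j w_j delta_{xi^j} <= 2 C2 mu_{w,xi}.
   The discrete norm is the L_p norm for the weighted Dirac measure
   sum_j w_j delta_{xi^j}, which is how Minkowski's inequality reaches it. *)

Lemma measurable_EFin_powR_norm d (T : measurableType d) (R : realType)
    (g : T -> R) (p : R) :
  measurable_fun setT g -> measurable_fun setT (fun x => (`|g x| `^ p)%:E).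
Proof.
move=> mg; apply/measurable_EFinP.
apply: measurableT_comp (measurable_powR _) _.
exact: measurableT_comp.
Qed.

Section weighted_dirac.
Local Open Scope ereal_scope.
Context d (T : measurableType d) (R : realType).
Variables (m : nat) (a : 'I_m -> T).

Definition wdirac (c : 'I_m -> {nonneg R}) : {measure set T -> \bar R} :=
  msum (fun n => if insub n is Some j then mscale (c j) \d_(a j) else mzero) m.

Lemma wdiracE c A : wdirac c A = \sum_(j < m) (c j)%:num%:E * \d_(a j) A.
Proof. by apply: eq_bigr => j _; rewrite valK. Qed.

Lemma ge0_integral_wdirac c (F : T -> \bar R) :
  measurable_fun setT F -> (forall x, 0 <= F x) ->
  \int[wdirac c]_x F x = \sum_(j < m) (c j)%:num%:E * F (a j).
Proof.
move=> mF F0; rewrite ge0_integral_measure_sum//; apply: eq_bigr => j _.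
by rewrite valK ge0_integral_mscale// integral_dirac// diracT mul1e.
Qed.

Lemma le_integral_wdirac (c c' : 'I_m -> {nonneg R}) (k : R) (F : T -> \bar R) :
  measurable_fun setT F -> (forall x, 0 <= F x) -> (0 <= k)%R ->
  (forall j, (c j)%:num <= k * (c' j)%:num)%R ->
  \int[wdirac c]_x F x <= k%:E * \int[wdirac c']_x F x.
Proof.
move=> mF F0 k0 cc'; rewrite !ge0_integral_wdirac// ge0_sume_distrr; last first.
  by move=> j _; apply: mule_ge0.
apply: lee_sum => j _; rewrite muleA -EFinM.
by apply: lee_wpmul2r => //; rewrite lee_fin.
Qed.

Lemma Lnorm_wdirac c p (g : T -> R) : measurable_fun setT g ->
  'N[wdirac c]_p%:E[EFin \o g] =
  ((\sum_(j < m) (c j)%:num * `|g (a j)| `^ p) `^ p^-1)%:E.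
Proof.
move=> mg; rewrite unlock ge0_integral_wdirac//=.
- by rewrite -poweR_EFin -sumEFin.
- exact: measurable_EFin_powR_norm.
Qed.

End weighted_dirac.

Section half_mixture.
Context d (T : measurableType d) (R : realType).
Variables (mu nu : {measure set T -> \bar R}).

Definition mhalf_add : {measure set T -> \bar R} :=
  measure_add (mscale (2^-1 : R)%:nng mu) nu.

Local Open Scope ereal_scope.

Lemma mhalf_addE A : mhalf_add A = (2^-1 : R)%:E * mu A + nu A.
Proof. exact: measure_addE. Qed.

Variables (F : T -> \bar R).
Hypotheses (mF : measurable_fun setT F) (F0 : forall x, 0 <= F x).

Lemma ge0_integral_mhalf_add :
  \int[mhalf_add]_x F x = (2^-1 : R)%:E * \int[mu]_x F x + \int[nu]_x F x.
Proof. by rewrite ge0_integral_measure_add// ge0_integral_mscale. Qed.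

Lemma integral_le_mhalf_add_l :
  \int[mu]_x F x <= 2%:E * \int[mhalf_add]_x F x.
Proof.
rewrite ge0_integral_mhalf_add ge0_muleDr ?mule_ge0 ?integral_ge0//.
rewrite muleA -EFinM divff ?pnatr_eq0// mul1e leeDl//.
by rewrite mule_ge0// integral_ge0.
Qed.

Lemma integral_le_mhalf_add_r : \int[nu]_x F x <= \int[mhalf_add]_x F x.
Proof.
by rewrite ge0_integral_mhalf_add leeDr// mule_ge0// ?integral_ge0// lee_fin.
Qed.

End half_mixture.

Lemma Lnorm_le_from_integral d (T : measurableType d) (R : realType)
    (mu nu : {measure set T -> \bar R}) (p k : R) (f : T -> \bar R) :
  0 < p -> 0 <= k ->
  (\int[mu]_x `|f x| `^ p <= k%:E * \int[nu]_x `|f x| `^ p)%E ->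
  ('N[mu]_p%:E[f] <= (k `^ p^-1)%:E * 'N[nu]_p%:E[f])%E.
Proof.
move=> p0 k0 le_int.
have int_ge0 (lambda : {measure set T -> \bar R}) :
  (0 <= \int[lambda]_x `|f x| `^ p)%E.
  by apply: integral_ge0 => x _; exact: poweR_ge0.
rewrite unlock -poweR_EFin -poweRM ?lee_fin//.
apply: gt0_ler_poweR => //; rewrite ?invr_ge0 ?ltW// !in_itv/= leey andbT//.
by rewrite mule_ge0 ?lee_fin.
Qed.

Lemma patchB (T : Type) (V : zmodType) (D : set T) (f g : T -> V) :
  (f \- g) \_ D = f \_ D \- g \_ D.
Proof. by apply/funext => x; rewrite /patch /=; case: ifP; rewrite ?subr0. Qed.

Section borelRd.
Variables (R : realType) (d : nat).
Implicit Types (Omega V : set 'rV[R]_d) (g h : 'rV[R]_d -> R).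

Lemma borelRd_open_measurable V : open V -> measurable (V : set (borelRd R d)).
Proof. exact: sub_sigma_algebra. Qed.

Lemma borelRd_closed_measurable V :
  closed V -> measurable (V : set (borelRd R d)).
Proof.
move=> cV; rewrite -(setCK V); apply: measurableC.
by apply: borelRd_open_measurable; exact: closed_openC.
Qed.

Lemma measurable_patch_continuous Omega h :
  closed Omega -> {within Omega, continuous h} ->
  measurable_fun (setT : set (borelRd R d)) (h \_ Omega).
Proof.
move=> cO ch; have mO := borelRd_closed_measurable cO.
apply/(measurable_restrictT _ mO).
apply: (measurability _ (RGenOpens.measurableE R)) => _ [_ [a [b ->]] <-].
have : open ((h : subspace Omega -> R) @^-1` `]a, b[).
  by move/continuousP: ch; apply; exact: interval_open.
case/open_subspaceP => V oV VE.
by rewrite setIC -VE; apply: measurableI => //; exact: borelRd_open_measurable.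
Qed.

Lemma measurable_patchB Omega g h :
  measurable_fun (setT : set (borelRd R d)) (g \_ Omega) ->
  measurable_fun (setT : set (borelRd R d)) (h \_ Omega) ->
  measurable_fun (setT : set (borelRd R d)) ((g \- h) \_ Omega).
Proof. by rewrite patchB; exact: measurable_funB. Qed.

Lemma LpnormOn_Lnorm (nu : {measure set borelRd R d -> \bar R}) Omega p g :
  0 < p -> LpnormOn nu Omega p g = ('N[nu]_p%:E[EFin \o g \_ Omega])%E.
Proof.
move=> p0; rewrite unlock /LpnormOn.
rewrite (integral_mkcond (Omega : set (borelRd R d))).
congr (_ `^ _)%E; apply: eq_integral => x _; rewrite /patch /=.
by case: ifP => //= _; rewrite normr0 powR0 ?gt_eqF.
Qed.

Lemma LpnormOn_triangle (nu : {measure set borelRd R d -> \bar R}) Omega p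
    (f g h : 'rV[R]_d -> R) :
  1 <= p ->
  measurable_fun (setT : set (borelRd R d)) (f \_ Omega) ->
  measurable_fun (setT : set (borelRd R d)) (g \_ Omega) ->
  measurable_fun (setT : set (borelRd R d)) (h \_ Omega) ->
  (LpnormOn nu Omega p (f \- h)%R
    <= LpnormOn nu Omega p (f \- g)%R + LpnormOn nu Omega p (g \- h)%R)%E.
Proof.
move=> p1 mf mg mh; have p0 : 0 < p by exact: lt_le_trans p1.
rewrite !LpnormOn_Lnorm// !patchB.
have -> : f \_ Omega \- h \_ Omega =
    (f \_ Omega \- g \_ Omega) \+ (g \_ Omega \- h \_ Omega).
  by apply/funext => x /=; rewrite addrA subrK.
by apply: minkowski_EFin => //; exact: measurable_funB.
Qed.

End borelRd.

Lemma inSpanOnB (R : realType) (d N : nat) (Omega : set 'rV[R]_d)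
    (phi : 'I_N -> 'rV[R]_d -> R) (u v : 'rV[R]_d -> R) :
  inSpanOn Omega phi u -> inSpanOn Omega phi v -> inSpanOn Omega phi (u \- v).
Proof.
move=> [a ua] [b vb]; exists (fun i => a i - b i) => x Ox /=.
by rewrite ua // vb // -sumrB; apply: eq_bigr => i _; rewrite mulrBl.
Qed.

Lemma measurable_patch_inSpanOn (R : realType) (d N : nat)
    (Omega : set 'rV[R]_d) (phi : 'I_N -> 'rV[R]_d -> R) (u : 'rV[R]_d -> R) :
  closed Omega -> (forall i, {within Omega, continuous (phi i)}) ->
  inSpanOn Omega phi u ->
  measurable_fun (setT : set (borelRd R d)) (u \_ Omega).
Proof.
move=> cO phic [c uc].
have -> : u \_ Omega = fun x => \sum_(i < N) c i * (phi i \_ Omega) x.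
  apply/funext => x; rewrite /patch; case: ifPn => [/set_mem/uc//|_].
  by rewrite big1 // => i _; rewrite mulr0.
apply: measurable_sum => i; apply: measurable_funM => //.
exact: measurable_patch_continuous.
Qed.

Section Snorm.
Variables (R : realType) (d m : nat) (xi : 'I_m -> 'rV[R]_d) (w : 'I_m -> R).
Variable (p : R).

Lemma Snorm_subC (f g : 'rV[R]_d -> R) :
  Snorm w xi p (f \- g) = Snorm w xi p (g \- f).
Proof. by rewrite /Snorm; under eq_bigr do rewrite distrC. Qed.

Hypotheses (w_ge0 : forall j, 0 <= w j) (p_gt0 : 0 < p).
Variable Omega : set 'rV[R]_d.
Hypothesis xiO : forall j, Omega (xi j).

Lemma Snorm_LpnormOn (g : 'rV[R]_d -> R) :
  measurable_fun (setT : set (borelRd R d)) (g \_ Omega) ->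
  (Snorm w xi p g)%:E
    = LpnormOn (wdirac (T := borelRd R d) xi (fun j => NngNum (w_ge0 j)))
        Omega p g.
Proof.
move=> mg; rewrite LpnormOn_Lnorm // (Lnorm_wdirac _ _ _ mg).
congr ((_ `^ _)%:E); apply: eq_bigr => j _.
by rewrite /patch mem_set.
Qed.

Lemma Snorm_triangle (f g h : 'rV[R]_d -> R) : 1 <= p ->
  measurable_fun (setT : set (borelRd R d)) (f \_ Omega) ->
  measurable_fun (setT : set (borelRd R d)) (g \_ Omega) ->
  measurable_fun (setT : set (borelRd R d)) (h \_ Omega) ->
  Snorm w xi p (f \- h) <= Snorm w xi p (f \- g) + Snorm w xi p (g \- h).
Proof.
move=> p1 mf mg mh.
have := LpnormOn_triangle
  (wdirac (T := borelRd R d) xi (fun j => NngNum (w_ge0 j))) p1 mf mg mh.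
by rewrite -!Snorm_LpnormOn -?EFinD ?lee_fin//; exact: measurable_patchB.
Qed.

End Snorm.

Section lebesgue_inequality.
Variables (R : realType) (d : nat) (Omega : set 'rV[R]_d).
Variables (mu : {measure set borelRd R d -> \bar R}) (p : R).
Variables (N : nat) (phi : 'I_N -> 'rV[R]_d -> R).
Variables (m : nat) (xi : 'I_m -> 'rV[R]_d) (w : 'I_m -> R) (C1 C2 : R).
Hypotheses (p_ge1 : 1 <= p) (xiO : forall j, Omega (xi j)).
Hypotheses (w_gt0 : forall j, 0 < w j) (wsum_le : \sum_(j < m) w j <= C2).

Let p_gt0 : 0 < p. Proof. exact: lt_le_trans p_ge1. Qed.
Let w_ge0 j : 0 <= w j. Proof. exact: ltW. Qed.

Lemma half_weight_ge0 j : 0 <= w j / (2 * \sum_(i < m) w i).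
Proof. by rewrite divr_ge0 // mulr_ge0 // sumr_ge0. Qed.

Definition half_weight j : {nonneg R} := NngNum (half_weight_ge0 j).

Local Notation mix := (mhalf_add mu (wdirac (T := borelRd R d) xi half_weight)).

Lemma mu_wxiE : mu_wxi mu w xi = mix.
Proof. by apply/funext => A; rewrite mhalf_addE wdiracE. Qed.

Lemma LpnormOn_le_mix (g : 'rV[R]_d -> R) :
  measurable_fun (setT : set (borelRd R d)) (g \_ Omega) ->
  (LpnormOn mu Omega p g <= (2 `^ p^-1)%:E * LpnormOn mix Omega p g)%E.
Proof.
move=> mg; rewrite !LpnormOn_Lnorm//.
apply: Lnorm_le_from_integral => //; apply: integral_le_mhalf_add_l => //.
- exact: measurable_EFin_powR_norm.
- by move=> x; exact: poweR_ge0.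
Qed.

Lemma Snorm_le_mix (g : 'rV[R]_d -> R) :
  measurable_fun (setT : set (borelRd R d)) (g \_ Omega) ->
  ((Snorm w xi p g)%:E <= ((2 * C2) `^ p^-1)%:E * LpnormOn mix Omega p g)%E.
Proof.
move=> mg; rewrite (Snorm_LpnormOn w_ge0 p_gt0 xiO mg) !LpnormOn_Lnorm//.
have mF := measurable_EFin_powR_norm p mg.
have W_ge0 : 0 <= \sum_(i < m) w i by rewrite sumr_ge0.
have C2_ge0 : 0 <= 2 * C2 by rewrite mulr_ge0 // (le_trans W_ge0).
apply: Lnorm_le_from_integral => //.
apply: le_trans (lee_wpmul2l _ (integral_le_mhalf_add_r _ _ mF _));
  last 2 first.
- by rewrite lee_fin.
- by move=> x; rewrite lee_fin powR_ge0.
apply: le_integral_wdirac => // [x|j /=]; first by rewrite lee_fin powR_ge0.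
have W_gt0 : 0 < \sum_(i < m) w i.
  by rewrite (bigD1 j) //= ltr_pwDl // sumr_ge0.
rewrite mulrA ler_pdivlMr ?mulr_gt0// [leLHS]mulrC.
by rewrite ler_wpM2r // ler_wpM2l.
Qed.

Variables (f u0 : 'rV[R]_d -> R).
Hypotheses (C1_gt0 : 0 < C1)
  (measurable_span : forall u, inSpanOn Omega phi u ->
     measurable_fun (setT : set (borelRd R d)) (u \_ Omega))
  (stability : forall u, inSpanOn Omega phi u ->
     (C1%:E * LpnormOn mu Omega p u <= (Snorm w xi p u)%:E)%E)
  (mf : measurable_fun (setT : set (borelRd R d)) (f \_ Omega))
  (u0_span : inSpanOn Omega phi u0)
  (u0_best : forall u, inSpanOn Omega phi u ->
     Snorm w xi p (f \- u0) <= Snorm w xi p (f \- u)).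

Lemma LpnormOn_sub_best_le u : inSpanOn Omega phi u ->
  (LpnormOn mu Omega p (u \- u0)%R
    <= (C1^-1 * (2 * (2 * C2) `^ p^-1))%:E * LpnormOn mix Omega p (f \- u)%R)%E.
Proof.
move=> us; have mu_ := measurable_span us; have mu0 := measurable_span u0_span.
have S_le : Snorm w xi p (u \- u0) <= 2 * Snorm w xi p (f \- u).
  have := Snorm_triangle w_ge0 p_gt0 xiO p_ge1 mu_ mf mu0.
  rewrite (Snorm_subC xi w p u f) => /le_trans; apply.
  by rewrite mulr_natl mulr2n lerD2l; exact: u0_best.
rewrite EFinM -muleA lee_pdivlMl //.
apply: le_trans (stability (inSpanOnB us u0_span)) _.
apply: (@le_trans _ _ (2 * Snorm w xi p (f \- u))%:E); first by rewrite lee_fin.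
rewrite !EFinM -muleA lee_wpmul2l ?lee_fin //.
by apply: Snorm_le_mix; exact: measurable_patchB.
Qed.

Lemma near_best_approximation u : inSpanOn Omega phi u ->
  (LpnormOn mu Omega p (f \- u0)%R
    <= (2 `^ p^-1 * (2 * C1^-1 * C2 `^ p^-1 + 1))%:E
       * LpnormOn mix Omega p (f \- u)%R)%E.
Proof.
move=> us; have mu_ := measurable_span us; have mu0 := measurable_span u0_span.
have C2_ge0 : 0 <= C2 by rewrite (le_trans _ wsum_le) // sumr_ge0.
have -> : 2 `^ p^-1 * (2 * C1^-1 * C2 `^ p^-1 + 1)
    = 2 `^ p^-1 + C1^-1 * (2 * (2 * C2) `^ p^-1).
  by rewrite powRM //; ring.
have k_ge0 : 0 <= C1^-1 * (2 * (2 * C2) `^ p^-1).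
  by rewrite mulr_ge0 ?invr_ge0 ?(ltW C1_gt0) // mulr_ge0 // powR_ge0.
rewrite EFinD ge0_muleDl ?lee_fin ?powR_ge0 //.
apply: le_trans (LpnormOn_triangle mu p_ge1 mf mu_ mu0) _.
apply: leeD; last exact: LpnormOn_sub_best_le.
by apply: LpnormOn_le_mix; exact: measurable_patchB.
Qed.

End lebesgue_inequality.

Theorem theorem2p1 (R : realType) (d : nat) (Omega : set 'rV[R]_d)
    (mu : probability (borelRd R d) R) (p : R) (N : nat)
    (phi : 'I_N -> 'rV[R]_d -> R) (m : nat) (xi : 'I_m -> 'rV[R]_d)
    (w : 'I_m -> R) (C1 C2 : R) :
  compact Omega ->
  mu (Omega : set (borelRd R d)) = 1%E ->
  1 <= p ->
  (forall i, {within Omega, continuous (phi i)}) ->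
  lin_indep_on Omega phi ->
  (forall j, Omega (xi j)) ->
  (forall j, 0 < w j) ->
  0 < C1 -> 0 < C2 ->
  (forall u, inSpanOn Omega phi u ->
     (C1%:E * LpnormOn mu Omega p u <= (Snorm w xi p u)%:E)%E) ->
  \sum_(j < m) w j <= C2 ->
  forall f : 'rV[R]_d -> R, {within Omega, continuous f} ->
  forall u0 : 'rV[R]_d -> R,
    inSpanOn Omega phi u0 ->
    (forall u, inSpanOn Omega phi u ->
       Snorm w xi p (f \- u0) <= Snorm w xi p (f \- u)) ->
    (LpnormOn mu Omega p (f \- u0)%R
       <= (2 `^ p^-1 * (2 * C1^-1 * C2 `^ p^-1 + 1))%:E
          * distLp (mu_wxi mu w xi) Omega p phi f)%E.
Proof.
move=> /(compact_closed (@norm_hausdorff _ _)) cO _ p_ge1 phic _ xiO w_gt0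
  C1_gt0 _ stability wsum_le f fc u0 u0_span u0_best.
have span_meas u := measurable_patch_inSpanOn (u := u) cO phic.
have K_gt0 : 0 < 2 `^ p^-1 * (2 * C1^-1 * C2 `^ p^-1 + 1).
  rewrite mulr_gt0 ?powR_gt0 // ltr_wpDl //.
  by rewrite !mulr_ge0 ?invr_ge0 ?powR_ge0 // ltW.
rewrite (mu_wxiE mu xi w_gt0) muleC -lee_pdivrMr //.
apply/ereal_infP => _ [u u_span <-]; rewrite lee_pdivrMr // muleC.
exact: (near_best_approximation p_ge1 xiO w_gt0 wsum_le C1_gt0 span_meas
  stability (measurable_patch_continuous cO fc) u0_span u0_best).
Qed.
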